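(* Let $\Phi$ be a first-order sentence, $A$ a unary predicate, $R$ a binary predicate, and $U$ and $B$ fresh unary and binary predicates, respectively, that do not occur in $\Phi$, and let $r,k$ be non-negative integers with $0 \le r < k$. Define $\Upsilon_1 = \forall x\, \exists^{=r, k} y : B(x, y)$, $\Upsilon_2 = (|U| = r)$, $\Upsilon_3 = \forall x \forall y : (A(x) \land B(x, y) \to U(y))$, $\Upsilon_4 = \forall x \forall y : \neg A(x) \to (B(x, y) \leftrightarrow R(x, y))$. Extend the weighting functions $(w,\bar w)$ by $w(U)=\bar w(U)=w(B)=\bar w(B)=1$. Then for every domain size $n$ with $r,k<n$, $$\mathsf{WFOMC}\big(\Phi \land \forall x : (A(x) \lor \exists^{=r,k} y : R(x, y)), n, w, \bar{w}\big) = \frac{1}{\binom{n}{r}} \mathsf{WFOMC}(\Phi \land \Upsilon_1 \land \Upsilon_2 \land \Upsilon_3 \land \Upsilon_4, n, w, \bar{w}).$$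
   Context: Function-free first-order logic over the domain $[n]=\{1,\dots,n\}$. $\exists^{=r,k} y:\phi(y)$ holds iff the number of domain elements $c$ with $\phi(c)$ is congruent to $r$ modulo $k$. $|U|=r$ is a cardinality constraint: exactly $r$ ground atoms $U(c)$ are true. A weighting is a pair of functions $w,\bar w$ from predicates to $\mathbb{R}$; the weight of a model (set of ground literals) is the product of $w(P)$ over its true ground literals of predicate $P$ and $\bar w(P)$ over its false ones; $\mathsf{WFOMC}(\Gamma,n,w,\bar w)$ is the sum of the weights of all models of $\Gamma$ over $[n]$. *)

From mathcomp Require Import all_boot all_order all_algebra.
Set Implicit Arguments. Unset Strict Implicit. Unset Printing Implicit Defensive.
Import Order.TTheory GRing.Theory Num.Theory.

(* A predicate symbol: (name, arity). *)
Definition psym := (nat * nat)%type.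
Definition arity (P : psym) : nat := P.2.

Inductive fol_form : Type :=
| Atom (P : psym) (xs : seq nat)
| Eq (x y : nat)
| Top | Bot
| Neg (f : fol_form)
| And (f g : fol_form) | Or (f g : fol_form) | Imp (f g : fol_form) | Iff (f g : fol_form)
| All (x : nat) (f : fol_form)
| Ex (x : nat) (f : fol_form)
| CntMod (x r k : nat) (f : fol_form)
| Card (P : psym) (r : nat).

Fixpoint occ (f : fol_form) : seq psym :=
  match f with
  | Atom P _ => [:: P]
  | Eq _ _ | Top | Bot => [::]
  | Neg g | All _ g | Ex _ g | CntMod _ _ _ g => occ g
  | And g h | Or g h | Imp g h | Iff g h => occ g ++ occ h
  | Card P _ => [:: P]
  end.
Definition voc (f : fol_form) : seq psym := undup (occ f).

Fixpoint fv (f : fol_form) : seq nat :=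
  match f with
  | Atom _ xs => xs
  | Eq x y => [:: x; y]
  | Top | Bot | Card _ _ => [::]
  | Neg g => fv g
  | And g h | Or g h | Imp g h | Iff g h => fv g ++ fv h
  | All x g | Ex x g | CntMod x _ _ g => filter (predC1 x) (fv g)
  end.
Definition sentence (f : fol_form) : bool := fv f == [::].

Fixpoint wf (f : fol_form) : bool :=
  match f with
  | Atom P xs => size xs == arity P
  | Eq _ _ | Top | Bot | Card _ _ => true
  | Neg g | All _ g | Ex _ g | CntMod _ _ _ g => wf g
  | And g h | Or g h | Imp g h | Iff g h => wf g && wf h
  end.

Fixpoint is_FO (f : fol_form) : bool :=
  match f with
  | Atom _ _ | Eq _ _ | Top | Bot => true
  | Neg g | All _ g | Ex _ g => is_FO g
  | And g h | Or g h | Imp g h | Iff g h => is_FO g && is_FO h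
  | CntMod _ _ _ _ | Card _ _ => false
  end.

Definition dom (n : nat) : seq nat := iota 1 n.

Fixpoint tuples (n a : nat) : seq (seq nat) :=
  match a with
  | 0 => [:: [::]]
  | a'.+1 => [seq c :: t | c <- dom n, t <- tuples n a']
  end.

Definition interp := psym -> seq nat -> bool.

Definition upd (e : nat -> nat) (x c : nat) : nat -> nat :=
  fun z => if z == x then c else e z.

Fixpoint holds (n : nat) (I : interp) (e : nat -> nat) (f : fol_form) : bool :=
  match f with
  | Atom P xs => I P (map e xs)
  | Eq x y => e x == e y
  | Top => true
  | Bot => false
  | Neg g => ~~ holds n I e g
  | And g h => holds n I e g && holds n I e h
  | Or g h => holds n I e g || holds n I e h
  | Imp g h => holds n I e g ==> holds n I e h
  | Iff g h => holds n I e g == holds n I e h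
  | All x g => all (fun c => holds n I (upd e x c) g) (dom n)
  | Ex x g => has (fun c => holds n I (upd e x c) g) (dom n)
  | CntMod x r k g =>
      count (fun c => holds n I (upd e x c) g) (dom n) == r %[mod k]
  | Card P r => count (fun t => I P t) (tuples n (arity P)) == r
  end.

Definition gatoms (n : nat) (V : seq psym) : seq (psym * seq nat) :=
  [seq (P, t) | P <- V, t <- tuples n (arity P)].

(* all boolean sequences of length m: a model assigns a truth value to each
   ground atom (listed in gatoms order) *)
Fixpoint bools (m : nat) : seq (seq bool) :=
  match m with
  | 0 => [:: [::]]
  | m'.+1 => [seq b :: s | b <- [:: true; false], s <- bools m']
  end.

Definition interp_of (ga : seq (psym * seq nat)) (s : seq bool) : interp :=
  fun P t => nth false s (index (P, t) ga).

Section WFOMC.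
Variable R : realFieldType.
Local Open Scope ring_scope.

Definition model_weight (w wbar : psym -> R) (ga : seq (psym * seq nat))
  (s : seq bool) : R :=
  \prod_(a <- zip ga s) (if a.2 then w a.1.1 else wbar a.1.1).

(* the (default) environment is irrelevant for sentences *)
Definition env0 : nat -> nat := fun _ => 1%N.

Definition WFOMC (G : fol_form) (n : nat) (w wbar : psym -> R) : R :=
  let ga := gatoms n (voc G) in
  \sum_(s <- bools (size ga) | holds n (interp_of ga s) env0 G)
     model_weight w wbar ga s.
End WFOMC.

(* In a model of the right-hand sentence, Upsilon_3 puts every row B(c, -) with A(c)
   inside U; since |U| = r < k, the congruence of Upsilon_1 forces that row to have
   exactly r elements, i.e. to be U itself.  Upsilon_4 makes every other row equal to
   R(c, -), and Upsilon_1 on those rows is the counting constraint of the left-hand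
   sentence.  Hence, after reordering the ground atoms so that those of U and B come
   last, every model of the left-hand sentence extends to a model of the right-hand
   one by an arbitrary r-subset U, with B then uniquely determined; as U and B have
   weight 1, each left-hand model is counted 'C(n, r) times. *)

From mathcomp Require Import all_boot all_order all_algebra.
From Stdlib Require Import FunctionalExtensionality.
Set Implicit Arguments. Unset Strict Implicit. Unset Printing Implicit Defensive.
Import Order.TTheory GRing.Theory Num.Theory.
Local Open Scope ring_scope.

Lemma all_allpairs (S T R : Type) (p : pred R) (f : S -> T -> R) s t :
  all p [seq f x y | x <- s, y <- t] = all (fun x => all (fun y => p (f x y)) t) s.
Proof. by elim: s => //= x s IH; rewrite all_cat all_map IH. Qed.

Lemma sumr_count (R : pzSemiRingType) (T : Type) (l : seq T) (p : pred T) :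
  \sum_(x <- l) (p x)%:R = (count p l)%:R :> R.
Proof.
by rewrite -sum1_count natr_sum [RHS]big_mkcond; apply: eq_bigr => x _; case: (p x).
Qed.

Section CountSub.
Variable T : eqType.

Lemma sub_in_count (l : seq T) (p q : pred T) :
  {in l, subpred p q} -> (count p l <= count q l)%N.
Proof.
move=> pq; rewrite (eq_in_count (a2 := predI p (mem l))) => [|x /= ->]; last first.
  by rewrite andbT.
by apply: sub_count => x /andP [px xl]; apply: pq.
Qed.

Lemma sub_in_count_eq (l : seq T) (p q : pred T) :
  {in l, subpred p q} -> count p l = count q l -> {in l, p =1 q}.
Proof.
elim: l => //= x s IH pq eq_cnt.
have pq_s : {in s, subpred p q} by move=> y ys; apply: pq; rewrite inE ys orbT.
have pq_x : p x = q x.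
  case: (boolP (p x)) => [/(pq x (mem_head x s)) -> // | npx].
  apply/esym/negP => qx; move: eq_cnt; rewrite (negbTE npx) qx add0n add1n => eq_cnt.
  by move: (sub_in_count pq_s); rewrite eq_cnt ltnn.
move=> y; rewrite inE => /predU1P [-> // | ys]; apply: IH => //.
by move: eq_cnt; rewrite pq_x => /addnI.
Qed.

Lemma count_mod_sub_eq (l : seq T) (p q : pred T) r k : (r < k)%N ->
  {in l, subpred p q} -> count q l = r -> count p l = r %[mod k] -> {in l, p =1 q}.
Proof.
move=> r_lt_k pq cnt_q cnt_p; apply: sub_in_count_eq => //; rewrite cnt_q.
have cnt_p_lt_k : (count p l < k)%N.
  by rewrite (leq_ltn_trans _ r_lt_k) // -cnt_q sub_in_count.
by rewrite -(modn_small cnt_p_lt_k) cnt_p modn_small.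
Qed.
End CountSub.

(* Upsilon_1, ..., Upsilon_4 read row by row, with [b c] the row of B at c: the
   congruence and [count u l = r < k] force [b c = u] on the rows where [a c] holds. *)
Lemma mod_count_constraintsE (T : eqType) (l : seq T) r k (a u : pred T)
    (rr b : T -> pred T) :
  (r < k)%N ->
  [&& all (fun c => count (b c) l == r %[mod k]) l, count u l == r,
      all (fun c => all (fun d => a c && b c d ==> u d) l) l &
      all (fun c => all (fun d => ~~ a c ==> (b c d == rr c d)) l) l]
  = [&& all (fun c => a c || (count (rr c) l == r %[mod k])) l,
        all (fun c => all (fun d => b c d == (if a c then u d else rr c d)) l) l &
        count u l == r].
Proof.
move=> r_lt_k; apply/idP/idP.
- case/and4P => /allP b_mod /eqP cnt_u /allP ab_u /allP nab_rr.
  have b_eq c : c \in l -> {in l, b c =1 if a c then u else rr c}.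
    move=> cl; case: ifP => ac.
      apply: (count_mod_sub_eq r_lt_k) => // [d dl | ]; last exact/eqP/b_mod.
      by move/allP: (ab_u c cl) => /(_ d dl); rewrite ac => /implyP.
    by move=> d dl; move/allP: (nab_rr c cl) => /(_ d dl); rewrite ac => /eqP.
  rewrite cnt_u eqxx andbT; apply/andP; split; apply/allP => c cl.
    case: (boolP (a c)) (b_eq c cl) => [// | nac] /=.
    by move=> /eq_in_count <-; apply: b_mod.
  by apply/allP => d dl; rewrite (b_eq c cl d dl); case: (a c).
- case/and3P => /allP a_rr /allP b_def /eqP cnt_u.
  have b_eq c : c \in l -> {in l, b c =1 if a c then u else rr c}.
    by move=> cl d dl; move/allP: (b_def c cl) => /(_ d dl) /eqP ->; case: (a c).
  apply/and4P; split; [apply/allP => c cl | by rewrite cnt_u | apply/allP => c cl ..].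
  + by rewrite (eq_in_count (b_eq c cl)); case: (a c) (a_rr c cl); rewrite ?cnt_u.
  + by apply/allP => d dl; rewrite (b_eq c cl d dl); case: (a c); case: (u d).
  + by apply/allP => d dl; rewrite (b_eq c cl d dl); case: (a c); rewrite /= ?eqxx.
Qed.

Lemma mem_bools m s : (s \in bools m) = (size s == m).
Proof.
elim: m s => [|m IH] [|b s] //=; rewrite !mem_cat orbF.
  by apply/norP; split; apply/mapP => -[].
have mem_cons (b' : bool) :
    (b :: s \in [seq b' :: s | s <- bools m]) = (b == b') && (size s == m).
  apply/mapP/andP => [[s' Hs' [-> ->]] | [/eqP -> Hs]]; first by rewrite -IH.
  by exists s; rewrite ?IH.
by rewrite !mem_cons {mem_cons} eqSS; case: b; rewrite ?orbF.
Qed.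

Lemma size_bools m s : s \in bools m -> size s = m.
Proof. by rewrite mem_bools => /eqP. Qed.

Lemma uniq_bools m : uniq (bools m).
Proof.
elim: m => [|m IH] //; apply: allpairs_uniq => //.
by move=> [b1 s1] [b2 s2] _ _ /= [-> ->].
Qed.

Lemma big_bools_cat (R : Type) (idx : R) (op : Monoid.law idx) m1 m2
    (F : seq bool -> R) :
  \big[op/idx]_(s <- bools (m1 + m2)) F s =
  \big[op/idx]_(s1 <- bools m1) \big[op/idx]_(s2 <- bools m2) F (s1 ++ s2).
Proof.
elim: m1 F => [|m1 IH] F; first by rewrite add0n big_seq1.
by rewrite addSn !big_allpairs_dep; apply: eq_bigr => b _; rewrite IH.
Qed.

Lemma count_bools_ones m r : count (fun s => count id s == r) (bools m) = 'C(m, r).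
Proof.
elim: m r => [|m IH] r; first by case: r.
rewrite /= count_cat cats0 !count_map IH.
under eq_count do rewrite /= add1n.
case: r => [|r]; last by rewrite IH binS addnC.
by rewrite (@eq_count _ _ pred0) // count_pred0 !bin0.
Qed.

Definition join (ga : seq (psym * seq nat)) (I1 I2 : interp) : interp :=
  fun P t => if (P, t) \in ga then I1 P t else I2 P t.

Lemma interp_of_out ga s P t :
  (P, t) \notin ga -> size s = size ga -> interp_of ga s P t = false.
Proof. by move=> Pt_out Hs; rewrite /interp_of memNindex // nth_default // Hs. Qed.

Lemma interp_of_map ga (f : psym * seq nat -> bool) x :
  x \in ga -> interp_of ga (map f ga) x.1 x.2 = f x.
Proof.
by case: x => P t Hx; rewrite /interp_of (nth_map (P, t)) ?index_mem // nth_index.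
Qed.

Lemma map_interp_of ga s : uniq ga -> size s = size ga ->
  [seq interp_of ga s x.1 x.2 | x <- ga] = s.
Proof.
move=> Hu Hs; apply: (@eq_from_nth _ false); rewrite size_map // => i Hi.
by rewrite (nth_map (0%N, 0%N, [::])) // /interp_of -surjective_pairing index_uniq.
Qed.

Lemma interp_of_cat ga1 ga2 s1 s2 : size s1 = size ga1 ->
  interp_of (ga1 ++ ga2) (s1 ++ s2) = join ga1 (interp_of ga1 s1) (interp_of ga2 s2).
Proof.
move=> Hs; apply: functional_extensionality => P; apply: functional_extensionality => t.
rewrite /interp_of /join index_cat nth_cat Hs.
case Pt_in: ((P, t) \in ga1); first by rewrite index_mem Pt_in.
by rewrite ltnNge leq_addr addKn.
Qed.

Lemma join_interp_ofl ga s I P t :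
  size s = size ga -> I P t = false ->
  join ga (interp_of ga s) I P t = interp_of ga s P t.
Proof. by move=> Hs IPt; rewrite /join; case: ifPn => // /interp_of_out ->. Qed.

Lemma count_bools_graph ga (f : psym * seq nat -> bool) : uniq ga ->
  count (fun s => all (fun x => interp_of ga s x.1 x.2 == f x) ga) (bools (size ga)) = 1%N.
Proof.
move=> Hu; rewrite (eq_in_count (a2 := pred1 (map f ga))).
  by rewrite count_uniq_mem ?uniq_bools // mem_bools size_map eqxx.
move=> s; rewrite mem_bools => /eqP Hs; apply/allP/eqP => [graph_f | ->].
  by rewrite -(map_interp_of Hu Hs); apply/eq_in_map => x /graph_f /eqP.
by move=> x Hx; rewrite interp_of_map.
Qed.

Lemma mem_gatoms n V x :
  (x \in gatoms n V) = (x.1 \in V) && (x.2 \in tuples n (arity x.1)).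
Proof.
case: x => P t; apply/allpairsPdep/andP => [[P' [t' [? ? [-> ->]]]] // | []].
by exists P, t.
Qed.

Lemma uniq_tuples n a : uniq (tuples n a).
Proof.
elim: a => [|a IH] //=; apply: allpairs_uniq => //; first exact: iota_uniq.
by move=> [c1 t1] [c2 t2] _ _ /= [-> ->].
Qed.

Lemma uniq_gatoms n V : uniq V -> uniq (gatoms n V).
Proof.
move=> HV; apply: allpairs_uniq_dep => // [P _|[P t] [P' t'] _ _ [-> ->]] //.
exact: uniq_tuples.
Qed.

Lemma gatoms_cat n V1 V2 : gatoms n (V1 ++ V2) = gatoms n V1 ++ gatoms n V2.
Proof. exact: allpairs_cat. Qed.

Lemma perm_gatoms n V V' : perm_eq V V' -> perm_eq (gatoms n V) (gatoms n V').
Proof. by move=> pVV'; apply: perm_allpairs_dep. Qed.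

Lemma interp_of_gatoms_out n V s P t :
  P \notin V -> size s = size (gatoms n V) -> interp_of (gatoms n V) s P t = false.
Proof. by move=> P_out; apply: interp_of_out; rewrite mem_gatoms negb_and P_out. Qed.

Lemma join_gatoms_out n V I1 I2 P t :
  P \notin V -> join (gatoms n V) I1 I2 P t = I2 P t.
Proof. by move=> P_out; rewrite /join mem_gatoms (negbTE P_out). Qed.

Lemma tuples1 n : tuples n 1 = [seq [:: c] | c <- dom n].
Proof. by rewrite /=; elim: (dom n) => //= c l ->. Qed.

Lemma gatoms_unary n U : arity U = 1%N ->
  gatoms n [:: U] = [seq (U, [:: c]) | c <- dom n].
Proof. by move=> HU; rewrite /gatoms /= cats0 HU tuples1 -map_comp. Qed.

Lemma count_gatoms_unary n U (p : pred (psym * seq nat)) : arity U = 1%N ->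
  count p (gatoms n [:: U]) = count (fun c => p (U, [:: c])) (dom n).
Proof. by move=> HU; rewrite gatoms_unary // count_map. Qed.

Lemma gatoms_binary n B : arity B = 2%N ->
  gatoms n [:: B] = [seq (B, [:: c; d]) | c <- dom n, d <- dom n].
Proof.
by move=> HB; rewrite /gatoms allpairs1l HB map_allpairs /= allpairs1r allpairs_mapr.
Qed.

Lemma eq_holds_occ n f (I J : interp) e :
  (forall P t, P \in occ f -> I P t = J P t) -> holds n I e f = holds n J e f.
Proof.
elim: f e => //=.
- by move=> P xs e IJ; rewrite IJ ?mem_head.
- by move=> g IH e IJ; rewrite IH.
all: try by move=> g IHg h IHh e IJ;
  rewrite IHg ?IHh // => P t HP; rewrite IJ // mem_cat HP ?orbT.
- by move=> x g IH e IJ; apply: eq_all => c; rewrite IH.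
- by move=> x g IH e IJ; apply: eq_has => c; rewrite IH.
- by move=> x r k g IH e IJ; under eq_count do rewrite IH //.
- by move=> P r e IJ; rewrite (eq_count (a2 := J P)) // => t; rewrite IJ ?mem_head.
Qed.

Section WeightedSums.
Variables (R : realFieldType) (w wbar : psym -> R).

Definition wsum (ga : seq (psym * seq nat)) (F : interp -> R) : R :=
  \sum_(s <- bools (size ga)) F (interp_of ga s) * model_weight w wbar ga s.

Lemma WFOMC_wsum G n :
  WFOMC G n w wbar = wsum (gatoms n (voc G)) (fun I => (holds n I env0 G)%:R).
Proof.
rewrite /WFOMC /wsum big_mkcond; apply: eq_bigr => s _.
by case: ifP; rewrite ?mul1r ?mul0r.
Qed.

Lemma eq_wsum ga F G :
  (forall s, size s = size ga -> F (interp_of ga s) = G (interp_of ga s)) ->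
  wsum ga F = wsum ga G.
Proof. by move=> FG; apply: eq_big_seq => s; rewrite mem_bools => /eqP /FG ->. Qed.

Lemma wsum_mulr ga F c : wsum ga (fun I => F I * c) = wsum ga F * c.
Proof. by rewrite /wsum mulr_suml; apply: eq_bigr => s _; rewrite mulrAC. Qed.

Lemma wsum_weight1 ga F : (forall x, x \in ga -> w x.1 = 1 /\ wbar x.1 = 1) ->
  wsum ga F = \sum_(s <- bools (size ga)) F (interp_of ga s).
Proof.
move=> w1; apply: eq_big_seq => s; rewrite mem_bools => /eqP Hs.
rewrite /model_weight big1_seq ?mulr1 // => -[x b] /andP[_ /(map_f fst)].
rewrite -[map fst _]/(unzip1 (zip ga s)) unzip1_zip ?Hs // => /w1 /= [w_x wbar_x].
by case: b; rewrite /= ?w_x ?wbar_x.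
Qed.

Lemma model_weight_cat ga1 ga2 s1 s2 : size s1 = size ga1 ->
  model_weight w wbar (ga1 ++ ga2) (s1 ++ s2) =
  model_weight w wbar ga1 s1 * model_weight w wbar ga2 s2.
Proof. by move=> Hs; rewrite /model_weight zip_cat // big_cat. Qed.

Lemma wsum_cat ga1 ga2 F :
  wsum (ga1 ++ ga2) F = wsum ga1 (fun I1 => wsum ga2 (fun I2 => F (join ga1 I1 I2))).
Proof.
rewrite /wsum size_cat big_bools_cat; apply: eq_big_seq => s1.
rewrite mem_bools => /eqP Hs1; rewrite mulr_suml; apply: eq_bigr => s2 _.
by rewrite interp_of_cat // model_weight_cat // mulrA mulrAC.
Qed.

Lemma model_weight_map ga (f : psym * seq nat -> bool) :
  model_weight w wbar ga (map f ga) =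
  \prod_(x <- ga) (if f x then w x.1 else wbar x.1).
Proof. by rewrite /model_weight -{1}(map_id ga) zip_map big_map. Qed.

(* Models are encoded as bit sequences along a list of atoms, whose order differs
   between the two sides; [reencode] changes the order and preserves weights. *)
Definition reencode (ga ga' : seq (psym * seq nat)) (s : seq bool) : seq bool :=
  [seq interp_of ga s x.1 x.2 | x <- ga'].

Lemma interp_of_reencode ga ga' s : perm_eq ga ga' -> size s = size ga ->
  interp_of ga' (reencode ga ga' s) = interp_of ga s.
Proof.
move=> ga_ga' Hs; apply: functional_extensionality => P.
apply: functional_extensionality => t.
have [Pt_in | Pt_out] := boolP ((P, t) \in ga'); first exact: (interp_of_map _ Pt_in).
by rewrite !interp_of_out ?size_map ?(perm_mem ga_ga').
Qed.

Lemma reencodeK ga ga' s : uniq ga -> perm_eq ga ga' -> size s = size ga ->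
  reencode ga' ga (reencode ga ga' s) = s.
Proof.
by move=> ga_uniq ga_ga' Hs; rewrite /reencode interp_of_reencode // map_interp_of.
Qed.

Lemma model_weight_reencode ga ga' s : uniq ga -> perm_eq ga ga' -> size s = size ga ->
  model_weight w wbar ga' (reencode ga ga' s) = model_weight w wbar ga s.
Proof.
move=> ga_uniq ga_ga' Hs.
by rewrite model_weight_map -(perm_big _ ga_ga') -model_weight_map map_interp_of.
Qed.

Lemma perm_reencode_bools ga ga' : uniq ga -> perm_eq ga ga' ->
  perm_eq (map (reencode ga ga') (bools (size ga))) (bools (size ga)).
Proof.
move=> ga_uniq ga_ga'; have ga'_ga := ga_ga'; rewrite perm_sym in ga'_ga.
have ga'_uniq : uniq ga' by rewrite -(perm_uniq ga_ga').
apply: uniq_perm; rewrite ?uniq_bools //.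
  rewrite map_inj_in_uniq ?uniq_bools // => s1 s2.
  rewrite !mem_bools => /eqP Hs1 /eqP Hs2 E.
  by rewrite -(reencodeK ga_uniq ga_ga' Hs1) E reencodeK.
move=> s; rewrite mem_bools; apply/mapP/eqP => [[s' _ ->] | Hs].
  by rewrite size_map (perm_size ga_ga').
exists (reencode ga' ga s); first by rewrite mem_bools size_map.
by rewrite reencodeK // -(perm_size ga_ga').
Qed.

Lemma wsum_perm ga ga' F : uniq ga -> perm_eq ga ga' -> wsum ga F = wsum ga' F.
Proof.
move=> ga_uniq ga_ga'.
rewrite /wsum -(perm_size ga_ga') -[RHS](perm_big _ (perm_reencode_bools ga_uniq ga_ga')).
rewrite big_map; apply: eq_big_seq => s; rewrite mem_bools => /eqP Hs.
by rewrite interp_of_reencode // model_weight_reencode.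
Qed.
End WeightedSums.

Section Reduction.
Variables (R : realFieldType) (w wbar : psym -> R).
Variables (Phi : fol_form) (A Rel U B : psym) (r k n : nat).
Hypotheses (A_unary : arity A = 1%N) (Rel_binary : arity Rel = 2%N).
Hypotheses (U_unary : arity U = 1%N) (B_binary : arity B = 2%N).
Hypotheses (U_fresh : U \notin voc Phi) (B_fresh : B \notin voc Phi).
Hypotheses (U_neq_A : U != A) (B_neq_Rel : B != Rel).
Hypothesis r_lt_k : (r < k)%N.
Hypotheses (w_U : w U = 1) (wbar_U : wbar U = 1) (w_B : w B = 1) (wbar_B : wbar B = 1).

Definition lhs : fol_form :=
  And Phi (All 0 (Or (Atom A [:: 0%N]) (CntMod 1 r k (Atom Rel [:: 0%N; 1%N])))).

(* Phi /\ Upsilon_1 /\ Upsilon_2 /\ Upsilon_3 /\ Upsilon_4, with x = 0 and y = 1. *)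
Definition rhs : fol_form :=
  And Phi
    (And (All 0 (CntMod 1 r k (Atom B [:: 0%N; 1%N])))
    (And (Card U r)
    (And (All 0 (All 1 (Imp (And (Atom A [:: 0%N]) (Atom B [:: 0%N; 1%N]))
                            (Atom U [:: 1%N]))))
         (All 0 (All 1 (Imp (Neg (Atom A [:: 0%N]))
                            (Iff (Atom B [:: 0%N; 1%N]) (Atom Rel [:: 0%N; 1%N])))))))).

Definition B_determined (J : interp) : bool :=
  all (fun c => all (fun d =>
    J B [:: c; d] == (if J A [:: c] then J U [:: d] else J Rel [:: c; d])) (dom n)) (dom n).

Lemma holds_rhs J : holds n J env0 rhs =
  [&& holds n J env0 lhs, count (fun d => J U [:: d]) (dom n) == r & B_determined J].
Proof.
rewrite /= /upd /= U_unary tuples1 count_map mod_count_constraintsE //.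
by rewrite andbA [_ && (count _ _ == r)]andbC.
Qed.

Lemma voc_lhs P : (P \in voc lhs) = [|| P \in voc Phi, P == A | P == Rel].
Proof. by rewrite !mem_undup /= !mem_cat !inE. Qed.

Lemma U_neq_B : U != B.
Proof. by apply/eqP => U_B; move: U_unary; rewrite U_B B_binary. Qed.

Lemma U_notin_lhs : U \notin voc lhs.
Proof.
rewrite voc_lhs (negbTE U_fresh) (negbTE U_neq_A) /=.
by apply/eqP => U_Rel; move: U_unary; rewrite U_Rel Rel_binary.
Qed.

Lemma B_notin_lhs : B \notin voc lhs.
Proof.
rewrite voc_lhs (negbTE B_fresh) (negbTE B_neq_Rel) orbF /=.
by apply/eqP => B_A; move: B_binary; rewrite B_A A_unary.
Qed.

Lemma perm_voc_rhs : perm_eq (voc lhs ++ [:: U; B]) (voc rhs).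
Proof.
apply: uniq_perm; rewrite ?undup_uniq //.
  by rewrite cat_uniq undup_uniq /= inE U_neq_B (negbTE U_notin_lhs) (negbTE B_notin_lhs).
move=> P; rewrite mem_cat voc_lhs !inE !mem_undup /= !mem_cat !inE.
by case: (P \in occ Phi); case: (P == A); case: (P == B); case: (P == U); case: (P == Rel).
Qed.

Let gaL := gatoms n (voc lhs).
Let gaU := gatoms n [:: U].
Let gaB := gatoms n [:: B].

Lemma perm_gatoms_rhs : perm_eq (gaL ++ gaU ++ gaB) (gatoms n (voc rhs)).
Proof. by rewrite -!gatoms_cat; apply: perm_gatoms perm_voc_rhs. Qed.

Lemma uniq_gatoms_split : uniq (gaL ++ gaU ++ gaB).
Proof. by rewrite (perm_uniq perm_gatoms_rhs) uniq_gatoms ?undup_uniq. Qed.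

(* Only atoms B(c, d) are ever tested; other tuples get a junk [false]. *)
Definition B_forced (I IU : interp) (x : psym * seq nat) : bool :=
  if x.2 is [:: c; d] then (if I A [:: c] then IU U [:: d] else I Rel [:: c; d]) else false.

Lemma holds_rhs_join s sU sB :
  size s = size gaL -> size sU = size gaU -> size sB = size gaB ->
  holds n (join gaL (interp_of gaL s) (join gaU (interp_of gaU sU) (interp_of gaB sB)))
    env0 rhs
  = [&& holds n (interp_of gaL s) env0 lhs, count id sU == r &
        all (fun x => interp_of gaB sB x.1 x.2 ==
                      B_forced (interp_of gaL s) (interp_of gaU sU) x) gaB].
Proof.
move=> Hs HsU HsB; set I := interp_of gaL s; set IU := interp_of gaU sU.
set IB := interp_of gaB sB; set J := join gaL I _.
have J_U : J U = IU U.
  apply: functional_extensionality => t; rewrite /J join_gatoms_out ?U_notin_lhs //.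
  by rewrite join_interp_ofl // /IB /gaB interp_of_gatoms_out ?mem_seq1 ?U_neq_B.
have J_B : J B = IB B.
  apply: functional_extensionality => t.
  by rewrite /J /gaL /gaU !join_gatoms_out ?B_notin_lhs // mem_seq1 eq_sym U_neq_B.
have J_I P : P \in voc lhs -> J P = I P.
  move=> P_lhs; have P_U : P != U by apply: contraNneq U_notin_lhs => <-.
  have P_B : P != B by apply: contraNneq B_notin_lhs => <-.
  apply: functional_extensionality => t; rewrite /J join_interp_ofl //.
  by rewrite /gaU join_gatoms_out ?mem_seq1 // /IB /gaB interp_of_gatoms_out ?mem_seq1.
have cnt_U : count (fun d => IU U [:: d]) (dom n) = count id sU.
  by rewrite -(map_interp_of (uniq_gatoms _ _) HsU) // count_map count_gatoms_unary.
rewrite holds_rhs (@eq_holds_occ n _ J I) => [|P t P_lhs]; last by rewrite J_I // mem_undup.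
rewrite /B_determined J_U J_B !J_I ?voc_lhs ?eqxx ?orbT // cnt_U.
by rewrite /gaB gatoms_binary // all_allpairs.
Qed.

Lemma wsum_rhs_fiber s : size s = size gaL ->
  wsum w wbar gaU (fun IU => wsum w wbar gaB (fun IB =>
    (holds n (join gaL (interp_of gaL s) (join gaU IU IB)) env0 rhs)%:R))
  = (holds n (interp_of gaL s) env0 lhs)%:R * 'C(n, r)%:R.
Proof.
move=> Hs.
have weight1_U x : x \in gaU -> w x.1 = 1 /\ wbar x.1 = 1.
  by rewrite mem_gatoms mem_seq1 => /andP [/eqP -> _].
have weight1_B x : x \in gaB -> w x.1 = 1 /\ wbar x.1 = 1.
  by rewrite mem_gatoms mem_seq1 => /andP [/eqP -> _].
rewrite wsum_weight1 //.
under eq_big_seq => sU /size_bools HsU.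
  rewrite wsum_weight1 //.
  under eq_big_seq => sB /size_bools HsB do rewrite holds_rhs_join //.
  over.
case: (holds n (interp_of gaL s) env0 lhs) => /=; last by rewrite mul0r !big1_eq.
rewrite mul1r.
have B_unique (b : bool) f :
    \sum_(sB <- bools (size gaB))
      (b && all (fun x => interp_of gaB sB x.1 x.2 == f x) gaB)%:R
    = b%:R :> R.
  by case: b; rewrite ?big1_eq // sumr_count count_bools_graph ?uniq_gatoms.
under eq_bigr => sU _ do rewrite B_unique.
by rewrite sumr_count count_bools_ones /gaU gatoms_unary // size_map size_iota.
Qed.

Lemma WFOMC_rhs : WFOMC rhs n w wbar = 'C(n, r)%:R * WFOMC lhs n w wbar.
Proof.
rewrite !WFOMC_wsum -(wsum_perm _ _ _ uniq_gatoms_split perm_gatoms_rhs) wsum_cat.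
rewrite mulrC -wsum_mulr; apply: eq_wsum => s Hs.
by rewrite wsum_cat wsum_rhs_fiber.
Qed.

End Reduction.

Theorem lemma3 (R : realFieldType) (Phi : fol_form) (A Rel U B : psym)
  (r k n : nat) (w wbar : psym -> R) :
  is_FO Phi -> sentence Phi -> wf Phi ->
  arity A = 1%N -> arity Rel = 2%N -> arity U = 1%N -> arity B = 2%N ->
  U \notin voc Phi -> B \notin voc Phi -> U != A -> B != Rel ->
  (r < k)%N -> (r < n)%N -> (k < n)%N ->
  w U = 1 -> wbar U = 1 -> w B = 1 -> wbar B = 1 ->
  WFOMC (And Phi (All 0 (Or (Atom A [:: 0%N])
                            (CntMod 1 r k (Atom Rel [:: 0%N; 1%N]))))) n w wbar
  = ('C(n, r)%:R)^-1 *
    WFOMC (And Phi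
            (And (All 0 (CntMod 1 r k (Atom B [:: 0%N; 1%N])))
            (And (Card U r)
            (And (All 0 (All 1 (Imp (And (Atom A [:: 0%N]) (Atom B [:: 0%N; 1%N]))
                                    (Atom U [:: 1%N]))))
                 (All 0 (All 1 (Imp (Neg (Atom A [:: 0%N]))
                                    (Iff (Atom B [:: 0%N; 1%N])
                                         (Atom Rel [:: 0%N; 1%N]))))))))) n w wbar.
Proof.
move=> _ _ _ A_unary Rel_binary U_unary B_binary U_fresh B_fresh U_neq_A B_neq_Rel.
move=> r_lt_k r_lt_n _ w_U wbar_U w_B wbar_B.
have binom_neq0 : 'C(n, r)%:R != 0 :> R by rewrite pnatr_eq0 -lt0n bin_gt0 ltnW.
by rewrite WFOMC_rhs // mulrA mulVf // mul1r.
Qed.
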